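(* Let $n\ge1$ and $p\in H_3(\mathbb{C}^n)$ be arbitrary. Then there exist: - an invertible linear change of variables $y_j=\sum_{k=1}^n\lambda_{jk}x_k$ ($1\le j\le n$); - $n$ linear forms $\ell_1,\dots,\ell_n\in H_1(\mathbb{C}^n)$; - a cubic form $q$ in the $n-1$ variables $y_2,\dots,y_n$, such that $$p(x_1,\dots,x_n) = \sum_{j=1}^n \ell_j^3(x_1,\dots,x_n) + q(y_2,\dots,y_n).$$ Consequently, every cubic form in $n$ variables over $\mathbb{C}$ is a sum of at most $\binom{n+1}{2}$ cubes of linear forms.
   Context: $H_d(\mathbb{C}^n)$ denotes the complex vector space of homogeneous polynomials of degree $d$ in $n$ variables. *)

From HB Require Import structures.
From mathcomp Require Import all_boot all_order all_algebra.
Set Implicit Arguments. Unset Strict Implicit. Unset Printing Implicit Defensive.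
Import Order.TTheory GRing.Theory Num.Theory.
Local Open Scope ring_scope.

(* A cubic form (element of H_3(F^n)), given by its coefficient tensor:
   p(x) = sum_{i,j,k} c(i,j,k) x_i x_j x_k.  Every cubic form arises this way. *)
Definition cform (F : nzRingType) (n : nat) := {ffun 'I_n * 'I_n * 'I_n -> F}.

Definition ceval (F : nzRingType) (n : nat) (c : cform F n) (x : 'cV[F]_n) : F :=
  \sum_(i < n) \sum_(j < n) \sum_(k < n) c (i, j, k) * x i 0 * x j 0 * x k 0.

Definition leval (F : nzRingType) (n : nat) (a : 'rV[F]_n) (x : 'cV[F]_n) : F :=
  \sum_(i < n) a 0 i * x i 0.

(* A cubic form (in the variables y_1..y_n) involving only y_2, .., y_n,
   i.e. a cubic form in the n-1 variables y_2,..,y_n: every coefficient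
   whose monomial contains y_1 (index 0) vanishes. *)
Definition avoids_first (F : nzRingType) (n : nat) (q : cform F n) : Prop :=
  forall i j k : 'I_n,
    (val i == 0%N) || (val j == 0%N) || (val k == 0%N) -> q (i, j, k) = 0.

(* Write p(x) = T(x,x,x) with T the symmetric coefficient tensor of p and pick
   v with p(v) <> 0.  The polar quadratic form M = T(v,.,.) is symmetric with
   v^T M v = p(v) <> 0.  Over an algebraically closed field of characteristic
   0 every symmetric matrix factors as M = B^T B, and an orthogonal change
   (a Householder reflection) makes all entries of B v nonzero; rescaling the
   rows of B by cube roots yields linear forms l_1..l_n whose cubes have the
   same polar at v as p.  The residual tensor T - sum_m l_m^3 is symmetric
   and vanishes when one slot is v, so in coordinates y whose first basis
   vector is v it no longer involves y_1: this is the first statement.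
   Iterating on the residual cubic in n-1 variables gives n + (n-1) + ... + 1
   = binom(n+1,2) cubes, the second statement. *)

From HB Require Import structures.
From mathcomp Require Import all_boot all_order all_algebra.
From mathcomp Require Import perm ring.
From Stdlib Require Classical_Prop.
Import Order.TTheory GRing.Theory Num.Theory.
Local Open Scope ring_scope.
Set Implicit Arguments. Unset Strict Implicit. Unset Printing Implicit Defensive.

Section CubicTensors.
Variable R : comNzRingType.

Definition teval n (r : 'I_n -> 'I_n -> 'I_n -> R) (x : 'cV[R]_n) : R :=
  \sum_i \sum_j \sum_k r i j k * x i 0 * x j 0 * x k 0.

Lemma ceval_teval n (p : cform R n) x :
  ceval p x = teval (fun i j k => p (i, j, k)) x.
Proof. by []. Qed.

Lemma eq_teval n (r s : 'I_n -> 'I_n -> 'I_n -> R) x :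
  (forall i j k, r i j k = s i j k) -> teval r x = teval s x.
Proof.
by move=> hrs; apply: eq_bigr => i _; apply: eq_bigr => j _; apply: eq_bigr => k _; rewrite hrs.
Qed.

Lemma teval0 n (r : 'I_n -> 'I_n -> 'I_n -> R) : teval r 0 = 0.
Proof.
by apply: big1 => i _; apply: big1 => j _; apply: big1 => k _; rewrite !mxE !mulr0.
Qed.

Lemma sum3 n (G : 'I_n -> 'I_n -> 'I_n -> R) :
  \sum_i \sum_j \sum_k G i j k = \sum_(t : 'I_n * ('I_n * 'I_n)) G t.1 t.2.1 t.2.2.
Proof. by under eq_bigr => i _ do rewrite pair_big /=; rewrite pair_big. Qed.

Lemma prod3 I (r : seq I) (z : R) (g h k : I -> R) :
  z * (\sum_(a <- r) g a) * (\sum_(b <- r) h b) * (\sum_(c <- r) k c) =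
  \sum_(a <- r) \sum_(b <- r) \sum_(c <- r) z * g a * h b * k c.
Proof.
rewrite [z * _]mulr_sumr big_distrlr /= mulr_suml; apply: eq_bigr => a _.
by rewrite mulr_suml; apply: eq_bigr => b _; rewrite mulr_sumr.
Qed.

Lemma tevalD n (r s : 'I_n -> 'I_n -> 'I_n -> R) x :
  teval (fun i j k => r i j k + s i j k) x = teval r x + teval s x.
Proof.
rewrite /teval -big_split; apply: eq_bigr => i _; rewrite -big_split.
by apply: eq_bigr => j _; rewrite -big_split; apply: eq_bigr => k _ /=; ring.
Qed.

Lemma tevalB n (r s : 'I_n -> 'I_n -> 'I_n -> R) x :
  teval (fun i j k => r i j k - s i j k) x = teval r x - teval s x.
Proof.
rewrite /teval -sumrB; apply: eq_bigr => i _; rewrite -sumrB.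
by apply: eq_bigr => j _; rewrite -sumrB; apply: eq_bigr => k _ /=; ring.
Qed.

Lemma tevalZ n (c : R) (r : 'I_n -> 'I_n -> 'I_n -> R) x :
  teval (fun i j k => c * r i j k) x = c * teval r x.
Proof.
rewrite /teval mulr_sumr; apply: eq_bigr => i _; rewrite mulr_sumr.
by apply: eq_bigr => j _; rewrite mulr_sumr; apply: eq_bigr => k _ /=; ring.
Qed.

(* The cubic form only depends on the tensor up to permutation of slots;
   the transpositions (12) and (23) generate all permutations. *)
Lemma tevalS12 n (r : 'I_n -> 'I_n -> 'I_n -> R) x :
  teval (fun i j k => r j i k) x = teval r x.
Proof.
rewrite /teval exchange_big; apply: eq_bigr => i _; apply: eq_bigr => j _.
by apply: eq_bigr => k _; ring.
Qed.

Lemma tevalS23 n (r : 'I_n -> 'I_n -> 'I_n -> R) x :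
  teval (fun i j k => r i k j) x = teval r x.
Proof.
rewrite /teval; apply: eq_bigr => i _; rewrite exchange_big; apply: eq_bigr => j _.
by apply: eq_bigr => k _; ring.
Qed.

Definition cubes m n (A : 'M[R]_(m, n)) i j k := \sum_(l < m) A l i * A l j * A l k.

Lemma teval_cubes m n (A : 'M[R]_(m, n)) (x : 'cV[R]_n) :
  teval (cubes A) x = \sum_(l < m) leval (row l A) x ^+ 3.
Proof.
have e3 (s : R) : s ^+ 3 = 1 * s * s * s by ring.
under [RHS]eq_bigr => l _ do rewrite e3 /leval prod3 sum3.
rewrite exchange_big /teval.
under [LHS]eq_bigr => a _ do under eq_bigr => b _ do under eq_bigr => c _ do
  rewrite !mulr_suml.
by rewrite [LHS]sum3; apply: eq_bigr => t _; apply: eq_bigr => l _ /=; rewrite !mxE; ring.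
Qed.

Definition tpull n (r : 'I_n -> 'I_n -> 'I_n -> R) (P : 'M[R]_n) a b c :=
  \sum_i \sum_j \sum_k r i j k * P i a * P j b * P k c.

Lemma teval_pull n (r : 'I_n -> 'I_n -> 'I_n -> R) (P : 'M[R]_n) (y : 'cV[R]_n) :
  teval (tpull r P) y = teval r (P *m y).
Proof.
rewrite /teval /tpull.
under [RHS]eq_bigr => i _ do under eq_bigr => j _ do under eq_bigr => k _ do
  rewrite !mxE prod3 sum3.
rewrite [RHS]sum3.
under [LHS]eq_bigr => a _ do under eq_bigr => b _ do under eq_bigr => c _ do
  rewrite sum3 !mulr_suml.
by rewrite [LHS]sum3 exchange_big; apply: eq_bigr => t _; apply: eq_bigr => s _ /=; ring.
Qed.

Lemma tpullS12 n (r : 'I_n -> 'I_n -> 'I_n -> R) (P : 'M[R]_n) :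
  (forall i j k, r i j k = r j i k) -> forall a b c, tpull r P a b c = tpull r P b a c.
Proof.
move=> hr a b c; rewrite /tpull exchange_big; apply: eq_bigr => i _.
by apply: eq_bigr => j _; apply: eq_bigr => k _; rewrite (hr j i k); ring.
Qed.

Lemma tpullS23 n (r : 'I_n -> 'I_n -> 'I_n -> R) (P : 'M[R]_n) :
  (forall i j k, r i j k = r i k j) -> forall a b c, tpull r P a b c = tpull r P a c b.
Proof.
move=> hr a b c; rewrite /tpull; apply: eq_bigr => i _; rewrite exchange_big.
by apply: eq_bigr => j _; apply: eq_bigr => k _; rewrite (hr i k j); ring.
Qed.

Definition polar n (r : 'I_n -> 'I_n -> 'I_n -> R) (v : 'cV[R]_n) : 'M[R]_n :=
  \matrix_(j, k) \sum_i r i j k * v i 0.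

Lemma polarB n (r s : 'I_n -> 'I_n -> 'I_n -> R) v :
  polar (fun i j k => r i j k - s i j k) v = polar r v - polar s v.
Proof.
by apply/matrixP => j k; rewrite /polar !mxE -sumrB; apply: eq_bigr => i _; rewrite mulrBl.
Qed.

Lemma bilinE n m1 m2 (M : 'M[R]_n) (X : 'M[R]_(n, m1)) (Y : 'M[R]_(n, m2)) a b :
  (X^T *m M *m Y) a b = \sum_j \sum_k X j a * M j k * Y k b.
Proof.
rewrite mxE [RHS]exchange_big; apply: eq_bigr => k _; rewrite mxE mulr_suml.
by apply: eq_bigr => j _; rewrite mxE.
Qed.

Lemma polar_diag n (r : 'I_n -> 'I_n -> 'I_n -> R) v :
  (v^T *m polar r v *m v) 0 0 = teval r v.
Proof.
rewrite bilinE /teval /polar.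
under eq_bigr => j _ do under eq_bigr => k _ do rewrite !mxE mulr_sumr mulr_suml.
under eq_bigr => j _ do rewrite exchange_big.
rewrite exchange_big; apply: eq_bigr => i _; apply: eq_bigr => j _.
by apply: eq_bigr => k _; ring.
Qed.

Lemma tpull_first0 n (r : 'I_n.+1 -> 'I_n.+1 -> 'I_n.+1 -> R) (P : 'M[R]_n.+1) v :
  polar r v = 0 -> (forall i, P i ord0 = v i 0) -> forall b c, tpull r P ord0 b c = 0.
Proof.
move=> hr hP b c; rewrite /tpull exchange_big; under eq_bigr => j _ do rewrite exchange_big.
apply: big1 => j _; apply: big1 => k _; rewrite -!mulr_suml.
under eq_bigr => i _ do rewrite hP.
by have := congr1 (fun M : 'M_n.+1 => M j k) hr; rewrite !mxE => ->; rewrite !mul0r.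
Qed.

End CubicTensors.

Section LinearAlgebra.
Variable F : fieldType.

(* A nonzero vector v is the first column of some invertible matrix: swap a
   nonzero entry of v to the top and complete by the identity. *)
Lemma first_column_unit n (v : 'cV[F]_n.+1) : v != 0 ->
  exists P : 'M[F]_n.+1, P \in unitmx /\ forall a, P a ord0 = v a 0.
Proof.
move=> vn0.
have [i hi] : exists i, v i 0 != 0.
  apply/existsP; apply: contraR vn0; rewrite negb_exists => /forallP H.
  by apply/eqP/matrixP => a b; rewrite (ord1 b) mxE; have := H a; rewrite negbK => /eqP.
pose w := xrow i ord0 v.
have hw : w ord0 0 = v i 0 by rewrite /w /xrow /row_perm mxE tpermR.
pose G := \matrix_(a, b) if b == ord0 then w a 0 else (a == b)%:R : F.
have Gu : G \in unitmx.
  rewrite unitmxE det_trig.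
    rewrite big_ord_recl big1 ?mulr1; last by move=> a _; rewrite mxE /= eqxx.
    by rewrite mxE eqxx hw unitfE.
  apply/forallP => a; apply/forallP => b; apply/implyP => hab.
  rewrite mxE; case: (b =P ord0) => [hb|_]; first by move: hab; rewrite hb.
  by case: (a =P b) => // hab0; move: hab; rewrite hab0 ltnn.
exists (xrow i ord0 G); split; first by rewrite xrowE unitmx_mul Gu andbT unitmx_perm.
by move=> a; rewrite /xrow /row_perm !mxE eqxx /w /xrow /row_perm tpermK.
Qed.

Lemma avoid_first_coordinate n (r : 'I_n.+1 -> 'I_n.+1 -> 'I_n.+1 -> F) v :
  (forall i j k, r i j k = r j i k) -> (forall i j k, r i j k = r i k j) ->
  v != 0 -> polar r v = 0 ->
  exists (lambda : 'M[F]_n.+1) (q : cform F n.+1),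
    lambda \in unitmx /\ avoids_first q /\
    forall x, teval r x = ceval q (lambda *m x).
Proof.
move=> r12 r23 vn0 hr.
have [P [Pu hP]] := first_column_unit vn0.
have r0 := tpull_first0 hr hP.
have p12 := tpullS12 P r12; have p23 := tpullS23 P r23.
exists (invmx P), [ffun t => tpull r P t.1.1 t.1.2 t.2]; split; first by rewrite unitmx_inv.
split.
  move=> i j k; rewrite ffunE /=.
  have e0 (a : 'I_n.+1) : val a == 0%N -> a = ord0 by move=> /eqP ha; exact: val_inj.
  case/orP => [/orP [/e0 -> | /e0 ->] | /e0 ->]; first exact: r0.
    by rewrite p12 r0.
  by rewrite p23 p12 r0.
move=> x; rewrite ceval_teval -[x in teval r x](mulKVmx Pu x) -teval_pull.
by apply: eq_teval => i j k; rewrite ffunE.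
Qed.

End LinearAlgebra.

Section CharZero.
Variable F : fieldType.
Hypothesis hchar : [pchar F] =i pred0.

Lemma natF_neq0 m : (0 < m)%N -> (m%:R : F) != 0.
Proof. by move=> hm; rewrite (proj1 (pcharf0P F) hchar) -lt0n. Qed.

Definition tsym n (r : 'I_n -> 'I_n -> 'I_n -> F) i j k :=
  6^-1 * (r i j k + r i k j + r j i k + r j k i + r k i j + r k j i).

Lemma tsymS12 n r (i j k : 'I_n) : tsym r i j k = tsym r j i k.
Proof. rewrite /tsym; ring. Qed.

Lemma tsymS23 n r (i j k : 'I_n) : tsym r i j k = tsym r i k j.
Proof. rewrite /tsym; ring. Qed.

Lemma teval_tsym n (r : 'I_n -> 'I_n -> 'I_n -> F) x : teval (tsym r) x = teval r x.
Proof.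
rewrite /tsym tevalZ !tevalD.
have e2 : teval (fun i j k => r i k j) x = teval r x by exact: tevalS23.
have e3 : teval (fun i j k => r j i k) x = teval r x by exact: tevalS12.
have e4 : teval (fun i j k => r j k i) x = teval r x.
  by rewrite (tevalS12 (fun i j k => r i k j)) tevalS23.
have e5 : teval (fun i j k => r k i j) x = teval r x.
  by rewrite (tevalS23 (fun i j k => r j i k)) tevalS12.
have e6 : teval (fun i j k => r k j i) x = teval r x.
  by rewrite (tevalS12 (fun i j k => r k i j)) e5.
rewrite e2 e3 e4 e5 e6.
have h6 : (6 : F) != 0 by exact: natF_neq0.
by apply: (canLR (mulKf h6)); ring.
Qed.

Lemma polar_tsym_sym n (r : 'I_n -> 'I_n -> 'I_n -> F) v :
  (polar (tsym r) v)^T = polar (tsym r) v.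
Proof. by apply/matrixP => j k; rewrite !mxE; apply: eq_bigr => i _; rewrite -tsymS23. Qed.

(* Polarization: a symmetric bilinear form with vanishing quadratic form is
   zero (2 is invertible). *)
Lemma quad_form_eq0 n (M : 'M[F]_n) : M^T = M ->
  (forall u : 'cV[F]_n, (u^T *m M *m u) 0 0 = 0) -> M = 0.
Proof.
move=> hM H; apply/matrixP => i j; rewrite mxE.
have hd (a b : 'I_n) :
    ((delta_mx a 0 : 'cV[F]_n)^T *m M *m (delta_mx b 0 : 'cV[F]_n)) 0 0 = M a b.
  rewrite trmx_delta -rowE mxE (bigD1 b) //= big1 ?addr0; first by rewrite !mxE !eqxx mulr1.
  by move=> k hk; rewrite !mxE (negbTE hk) mulr0.
have hdd a : M a a = 0 by rewrite -hd H.
have := H (delta_mx i 0 + delta_mx j 0).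
have eD (A B : 'M[F]_1) : (A + B) 0 0 = A 0 0 + B 0 0 by rewrite mxE.
rewrite mulmxDr [(_ + _)^T]linearD /= !mulmxDl !eD !hd !hdd.
have -> : M j i = M i j by rewrite -{1}hM mxE.
rewrite add0r addr0 -mulr2n -mulr_natr => /eqP.
by rewrite mulf_eq0 (negbTE (natF_neq0 (isT : (0 < 2)%N))) orbF => /eqP.
Qed.

Lemma householder n (t u : 'cV[F]_n) (sg : F) : sg ^+ 2 = 1 ->
  (u^T *m u) 0 0 = (t^T *m t) 0 0 ->
  (t^T *m t) 0 0 - sg * (u^T *m t) 0 0 != 0 ->
  exists O : 'M[F]_n, O^T *m O = 1%:M /\ O *m t = sg *: u.
Proof.
move=> hsg huu hne.
set pi := (t^T *m t) 0 0 in huu hne; set d := (u^T *m t) 0 0 in hne.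
have e11 (A : 'M[F]_1) : A = (A 0 0)%:M by exact: mx11_scalar.
have eB (A B : 'M[F]_1) : (A - B) 0 0 = A 0 0 - B 0 0 by rewrite !mxE.
have eZ c (A : 'M[F]_1) : (c *: A) 0 0 = c * A 0 0 by rewrite !mxE.
have dT : (t^T *m u) 0 0 = d by rewrite /d -[u^T *m t]trmxK trmx_mul trmxK [RHS]mxE.
pose w := t - sg *: u.
have hww : (w^T *m w) 0 0 = 2 * (pi - sg * d).
  rewrite /w [(_ - _)^T]linearB /= [(_ *: _)^T]linearZ /= mulmxBl mulmxBr mulmxBr.
  rewrite -!scalemxAl -!scalemxAr !eB !eZ dT huu -/pi -/d mulrA -expr2 hsg; ring.
have hwt : (w^T *m t) 0 0 = pi - sg * d.
  by rewrite /w [(_ - _)^T]linearB /= [(_ *: _)^T]linearZ /= mulmxBl -scalemxAl eB eZ.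
pose c := 2 / (w^T *m w) 0 0.
have c1 : c * (pi - sg * d) = 1.
  have h2 : (2 : F) != 0 by exact: natF_neq0.
  by rewrite /c hww invfM mulrA mulfV // mul1r mulVf.
exists (1%:M - c *: (w *m w^T)); split.
  rewrite [(_ - _)^T]linearB /= trmx1 [(_ *: _)^T]linearZ /= trmx_mul trmxK.
  rewrite mulmxBl mul1mx mulmxBr mulmx1 -scalemxAl -scalemxAr scalerA.
  have -> : w *m w^T *m (w *m w^T) = ((w^T *m w) 0 0) *: (w *m w^T).
    rewrite mulmxA -[w *m w^T *m w]mulmxA [w^T *m w]e11 mul_mx_scalar.
    by rewrite -scalemxAl [in RHS]mxE eqxx mulr1n.
  rewrite hww scalerA.
  have -> : c * c * (2 * (pi - sg * d)) = c + c.
    rewrite [LHS](_ : _ = 2 * c * (c * (pi - sg * d))); last by ring.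
    by rewrite c1; ring.
  by rewrite scalerDl opprB addrK subrK.
rewrite mulmxBl mul1mx -scalemxAl -mulmxA [w^T *m t]e11 hwt mul_mx_scalar scalerA.
by rewrite c1 scale1r /w opprB addrC subrK.
Qed.

End CharZero.

Section ClosedCharZero.
Variable F : closedFieldType.
Hypothesis hchar : [pchar F] =i pred0.

Lemma root_ex m (a : F) : (0 < m)%N -> exists c : F, c ^+ m = a.
Proof.
move=> hm; have [x hx] := @solve_monicpoly F m (fun i => if i == 0%N then a else 0) hm.
exists x; rewrite hx (bigD1 (Ordinal hm)) //= expr0 mulr1 big1 ?addr0 //.
by move=> i; rewrite -val_eqE /= => /negbTE ->; rewrite mul0r.
Qed.

Lemma root_family I m (g : I -> F) :
  (0 < m)%N -> exists c : I -> F, forall i, c i ^+ m = g i.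
Proof.
move=> hm; have ex i : exists c : F, c ^+ m == g i.
  by have [c hc] := root_ex (g i) hm; exists c; apply/eqP.
by exists (fun i => xchoose (ex i)) => i; apply/eqP/(xchooseP (ex i)).
Qed.

(* One step of symmetric Gaussian elimination: if the corner entry a of a
   symmetric M is nonzero and the Schur complement factors, so does M;
   the factor is block triangular with sqrt(a) in the corner. *)
Lemma sym_factor_corner n
    (IH : forall N : 'M[F]_n, N^T = N -> exists C : 'M[F]_n, N = C^T *m C)
    (M : 'M[F]_(1 + n)) : M^T = M -> M ord0 ord0 != 0 ->
  exists B : 'M[F]_(1 + n), M = B^T *m B.
Proof.
move=> hM ha; set a := M ord0 ord0 in ha.
have [s hs] := root_ex a (isT : (0 < 2)%N).
have s0 : s != 0 by apply: contraNneq ha => s0; rewrite -hs s0 expr0n.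
set b := ursubmx M.
have hul : ulsubmx M = a%:M.
  rewrite [LHS]mx11_scalar mxE /a; congr (_%:M); rewrite mxE; congr (M _ _); exact: val_inj.
have hdl : dlsubmx M = b^T by rewrite /b trmx_ursub hM.
pose N := drsubmx M - a^-1 *: (b^T *m b).
have hN : N^T = N by rewrite /N linearB /= linearZ /= trmx_mul trmxK trmx_drsub hM.
have [C hC] := IH N hN.
exists (block_mx (s%:M : 'M_1) (s^-1 *: b) 0 C).
rewrite tr_block_mx mulmx_block -[LHS]submxK hul hdl !trmx0 !mul0mx !mulmx0 !addr0.
rewrite tr_scalar_mx !mul_scalar_mx scalerA mulfV // scale1r scale_scalar_mx -expr2 hs.
rewrite linearZ /= mul_mx_scalar scalerA mulfV // scale1r.
rewrite -hC /N -scalemxAr -scalemxAl scalerA -expr2 exprVn hs.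
by rewrite addrC subrK -/b.
Qed.

(* Every symmetric matrix over F is of the form B^T B: move a non-isotropic
   vector (one exists unless M = 0) to the first basis vector and eliminate. *)
Lemma sym_factor n (M : 'M[F]_n) : M^T = M -> exists B : 'M[F]_n, M = B^T *m B.
Proof.
elim: n M => [|n IH] M hM; first by exists 0; rewrite !flatmx0.
case: (Classical_Prop.classic (exists u : 'cV[F]_n.+1, (u^T *m M *m u) 0 0 != 0))
  => [[u hu]|hno]; last first.
  exists 0; rewrite mulmx0; apply: quad_form_eq0 => // u.
  by apply/eqP; apply: contraT => hu; case: hno; exists u.
have un0 : u != 0 by apply: contraNneq hu => ->; rewrite mulmx0 mxE.
have [P [Pu hP]] := first_column_unit un0.
pose M' := P^T *m M *m P.
have hM' : M'^T = M' by rewrite /M' !trmx_mul trmxK hM mulmxA.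
have h00 : M' ord0 ord0 != 0.
  rewrite /M' bilinE; move: hu; rewrite bilinE.
  by under [in X in _ -> X]eq_bigr => j _ do under eq_bigr => k _ do rewrite !hP.
have [B hB] := sym_factor_corner IH hM' h00.
exists (B *m invmx P).
rewrite trmx_mul mulmxA -[_ *m B^T *m B]mulmxA -hB /M'.
by rewrite !mulmxA -trmx_mul mulmxV // trmx1 mul1mx -mulmxA mulmxV // mulmx1.
Qed.

(* A non-isotropic vector t can be rotated so that all its coordinates are
   nonzero: reflect it onto a multiple of the constant vector. *)
Lemma orthogonal_spread n (t : 'cV[F]_n.+1) : (t^T *m t) 0 0 != 0 ->
  exists O : 'M[F]_n.+1, O^T *m O = 1%:M /\ forall j, (O *m t) j 0 != 0.
Proof.
move=> hpi; set pi := (t^T *m t) 0 0 in hpi.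
have hN : (n.+1%:R : F) != 0 by exact: natF_neq0.
have [a ha] := root_ex (pi / n.+1%:R) (isT : (0 < 2)%N).
have a0 : a != 0.
  apply: contraNneq hpi => a0; move: ha; rewrite a0 expr0n /= => /esym /eqP.
  by rewrite mulf_eq0 invr_eq0 (negbTE hN) orbF.
pose u : 'cV[F]_n.+1 := const_mx a.
have huu : (u^T *m u) 0 0 = pi.
  rewrite mxE; under eq_bigr => j _ do rewrite !mxE.
  by rewrite sumr_const card_ord -mulr_natr -expr2 ha mulfVK.
have reflect_to (sg : F) : sg ^+ 2 = 1 -> pi - sg * (u^T *m t) 0 0 != 0 ->
    exists O : 'M[F]_n.+1, O^T *m O = 1%:M /\ forall j, (O *m t) j 0 != 0.
  move=> hsg hne; have [O [hO hOt]] := householder hchar hsg huu hne.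
  exists O; split => // j; rewrite hOt !mxE mulf_neq0 //.
  apply/eqP => sg0; move: hsg; rewrite sg0 expr0n /= => /eqP.
  by rewrite eq_sym oner_eq0.
have [h|h] := eqVneq (pi - 1 * (u^T *m t) 0 0) 0; last first.
  by apply: (reflect_to 1) => //; rewrite expr1n.
apply: (reflect_to (-1)); first by rewrite sqrrN expr1n.
move/eqP: h; rewrite mul1r subr_eq0 => /eqP <-; rewrite mulN1r opprK.
by rewrite -mulr2n -mulr_natr mulf_neq0 ?natF_neq0.
Qed.

(* Key step: a symmetric M with v^T M v <> 0 is the polar at v of a sum of
   n cubes.  Write M = C^T C with all entries of C v nonzero and rescale the
   rows of C by cube roots of 1 / (C v)_m. *)
Lemma polar_cubes n (M : 'M[F]_n.+1) (v : 'cV[F]_n.+1) :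
  M^T = M -> (v^T *m M *m v) 0 0 != 0 -> exists A : 'M[F]_n.+1, polar (cubes A) v = M.
Proof.
move=> hM hv.
have [B hB] := sym_factor hM.
have htt : ((B *m v)^T *m (B *m v)) 0 0 != 0.
  by rewrite trmx_mul -mulmxA [B^T *m _]mulmxA -hB mulmxA.
have [O [hO hOt]] := orthogonal_spread htt.
pose C := O *m B.
have hC : M = C^T *m C by rewrite /C trmx_mul -mulmxA [O^T *m _]mulmxA hO mul1mx.
have [c hc] := root_family (fun m => ((C *m v) m 0)^-1) (isT : (0 < 3)%N).
have hcC m : c m ^+ 3 * (C *m v) m 0 = 1 by rewrite hc mulVf // /C -mulmxA.
exists (\matrix_(m, i) (c m * C m i)); apply/matrixP => j k.
rewrite hC !mxE /cubes; under eq_bigr => i _ do rewrite mulr_suml.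
rewrite exchange_big; apply: eq_bigr => m _.
rewrite -(mul1r (C^T j m * C m k)) -(hcC m) [(C *m v) m 0]mxE mulr_sumr mulr_suml.
by apply: eq_bigr => i _; rewrite !mxE; ring.
Qed.

(* The cubes match the polar of p at a point v with p(v) <> 0,
   and the symmetric residual is killed by moving v to the first axis. *)
Lemma cubic_split n (p : cform F n.+1) :
  exists (lambda : 'M[F]_n.+1) (l : 'I_n.+1 -> 'rV[F]_n.+1) (q : cform F n.+1),
    lambda \in unitmx /\ avoids_first q /\
    forall x, ceval p x = \sum_(j < n.+1) leval (l j) x ^+ 3 + ceval q (lambda *m x).
Proof.
pose r := tsym (fun i j k => p (i, j, k)).
have hpr x : ceval p x = teval r x by rewrite teval_tsym.
case: (Classical_Prop.classic (exists v, teval r v != 0)) => [[v hv]|hno]; last first.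
  exists 1%:M, (fun _ => 0), [ffun _ => 0]; split; first exact: unitmx1.
  split=> [i j k _|x]; first by rewrite ffunE.
  have -> : ceval p x = 0.
    by rewrite hpr; apply/eqP; apply: contraT => hx; case: hno; exists x.
  rewrite big1 => [|j _]; last by rewrite /leval big1 ?expr0n // => i _; rewrite mxE mul0r.
  rewrite add0r /ceval big1 // => i _; apply: big1 => j _; apply: big1 => k _.
  by rewrite ffunE !mul0r.
have hMv : (v^T *m polar r v *m v) 0 0 != 0 by rewrite polar_diag.
have [A hA] := polar_cubes (polar_tsym_sym _ v) hMv.
have vn0 : v != 0 by apply: contraNneq hv => ->; rewrite teval0.
pose s i j k := r i j k - cubes A i j k.
have s12 i j k : s i j k = s j i k.
  by rewrite /s /r tsymS12 /cubes; congr (_ - _); apply: eq_bigr => m _; ring.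
have s23 i j k : s i j k = s i k j.
  by rewrite /s /r tsymS23 /cubes; congr (_ - _); apply: eq_bigr => m _; ring.
have hs0 : polar s v = 0 by rewrite polarB hA subrr.
have [lambda [q [lu [hq he]]]] := avoid_first_coordinate s12 s23 vn0 hs0.
exists lambda, (fun m => row m A), q; split=> //; split=> // x.
by rewrite hpr -teval_cubes -he tevalB addrC subrK.
Qed.

Definition drop_first k (q : cform F k.+1) : cform F k :=
  [ffun t => q (lift ord0 t.1.1, lift ord0 t.1.2, lift ord0 t.2)].

Lemma ceval_drop_first k (q : cform F k.+1) (y : 'cV[F]_k.+1) : avoids_first q ->
  ceval q y = ceval (drop_first q) (\col_i y (lift ord0 i) 0).
Proof.
move=> hq; rewrite /ceval big_ord_recl big1 ?add0r => [|j _]; last first.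
  by apply: big1 => i _; rewrite hq ?mul0r.
apply: eq_bigr => i _; rewrite big_ord_recl big1 ?add0r => [|j _]; last first.
  by rewrite hq ?mul0r ?orbT.
apply: eq_bigr => j _; rewrite big_ord_recl hq ?mul0r ?add0r ?orbT //.
by apply: eq_bigr => c _; rewrite ffunE !mxE.
Qed.

Lemma leval_mx m (a : 'rV[F]_m) x : leval a x = (a *m x) 0 0.
Proof. by rewrite mxE. Qed.

Lemma cubes_count k m (C : cform F k) (U : 'M[F]_(k, m)) :
  exists s : seq 'rV[F]_m, (size s <= 'C(k.+1, 2))%N /\
    forall x, ceval C (U *m x) = \sum_(a <- s) leval a x ^+ 3.
Proof.
elim: k C U => [|k IH] C U.
  by exists [::]; split => // x; rewrite big_nil /ceval big_ord0.
have [lam [l [q [hu [hq he]]]]] := cubic_split C.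
pose U' : 'M[F]_(k, m) := \matrix_(i, j) (lam *m U) (lift ord0 i) j.
have hU' x : \col_i (lam *m (U *m x)) (lift ord0 i) 0 = U' *m x.
  apply/matrixP => i j; rewrite (ord1 j) mulmxA [LHS]mxE [RHS]mxE.
  by rewrite mxE; apply: eq_bigr => c _; rewrite !mxE.
have [s' [hs' he']] := IH (drop_first q) U'.
exists ([seq l j *m U | j <- enum 'I_k.+1] ++ s'); split.
  by rewrite size_cat size_map size_enum_ord binS bin1 addnC leq_add2r.
move=> x; rewrite he big_cat /= big_map (ceval_drop_first _ hq) hU' -he'.
by congr (_ + _); rewrite big_enum /=; apply: eq_bigr => j _; rewrite !leval_mx mulmxA.
Qed.

End ClosedCharZero.

Unset Implicit Arguments. Set Strict Implicit. Set Printing Implicit Defensive.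

Theorem theorem6p2 (F : closedFieldType) (hchar : [pchar F] =i pred0)
    (n : nat) (hn : (1 <= n)%N) (p : cform F n) :
  (exists (lambda : 'M[F]_n) (l : 'I_n -> 'rV[F]_n) (q : cform F n),
      lambda \in unitmx /\ avoids_first q /\
      forall x : 'cV[F]_n,
        ceval p x = \sum_(j < n) (leval (l j) x) ^+ 3 + ceval q (lambda *m x))
  /\
  (exists s : seq 'rV[F]_n,
      (size s <= 'C(n.+1, 2))%N /\
      forall x : 'cV[F]_n, ceval p x = \sum_(a <- s) (leval a x) ^+ 3).
Proof.
split; first by case: n hn p => // n _ p; exact: cubic_split.
have [s [hs he]] := cubes_count hchar p (1%:M : 'M[F]_n).
by exists s; split => // x; rewrite -he mul1mx.
Qed.
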